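(* For any two predicates $P,Q$ and any concrete program $S$ (a program of the quantum while language containing no holes), if $\{P\}\,\square\,\{Q\}\hookrightarrow_{\mathrm{par}}^{*} S$, then $\models_{\mathrm{par}}\{P\}\,S\,\{Q\}$.
   Context: Quantum setting. There is a finite set $\mathrm{qVars}$ of quantum variables; each $q$ has Hilbert space $\mathcal H_q=\mathbb C^{\Sigma_q}$ ($\Sigma_q$ finite) with standard orthonormal basis $\{|x\rangle\}_{x\in\Sigma_q}$. For a set $\vec q\subseteq\mathrm{qVars}$, $\mathcal H_{\vec q}=\bigotimes_{q\in\vec q}\mathcal H_q$ with standard basis labelled by $\Sigma_{\vec q}=\prod_{q\in\vec q}\Sigma_q$, and $\mathcal H=\mathcal H_{\mathrm{qVars}}$. For an operator $A$ on $\mathcal H_{\vec q}$, $A_{\vec q}=A\otimes I$ on $\mathcal H$. $\preceq$ is the Löwner order. A partial state is a positive semidefinite (PSD) $\rho$ on $\mathcal H$ with $\operatorname{tr}\rho\le1$. A predicate is an operator $P$ on $\mathcal H$ with $0\preceq P\preceq I$; ''$P\Rightarrow Q$'' means $P\preceq Q$. A measurement on $\vec q$ is a family $\vec M=\{M_\omega\}_{\omega\in\Omega}$ ($\Omega$ finite) of PSD operators on $\mathcal H_{\vec q}$ with $\sum_\omega M_\omega=I$; write $\mathcal M_{\omega}(X)=\sqrt{M_{\omega,\vec q}}\,X\,\sqrt{M_{\omega,\vec q}}$. A binary measurement is given by an operator $B$ on $\mathcal H_{\vec q}$ with $0\preceq B\preceq I$, and $\mathcal B_{0,\vec q}(X)=\sqrt{(I-B)_{\vec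 q}}\,X\sqrt{(I-B)_{\vec q}}$, $\mathcal B_{1,\vec q}(X)=\sqrt{B_{\vec q}}\,X\sqrt{B_{\vec q}}$. Quantum while language: $S::=\mathbf{skip}\mid \vec q:=|0\rangle\mid \vec q\mathrel{*}=U\mid S_1;S_2\mid \mathbf{repeat}\ N\ \mathbf{do}\ S\mid \mathbf{case}\ \vec M[\vec q]\ \mathbf{of}\ \{\omega: S_\omega\}_{\omega\in\Omega}\mid \mathbf{while}\ B[\vec q]\ \mathbf{do}\ S$, with $U$ unitary on $\mathcal H_{\vec q}$, $N\in\mathbb N$. Denotational semantics $[\![S]\!]$ on partial states: $[\![\mathbf{skip}]\!](\rho)=\rho$; $[\![\vec q:=|0\rangle]\!](\rho)=\sum_{x\in\Sigma_{\vec q}}|0\rangle\langle x|_{\vec q}\,\rho\,|x\rangle\langle0|_{\vec q}$; $[\![\vec q\mathrel{*}=U]\!](\rho)=U_{\vec q}\rho U_{\vec q}^\dagger$; $[\![S_1;S_2]\!]=[\![S_2]\!]\circ[\![S_1]\!]$; $[\![\mathbf{repeat}\ N\ \mathbf{do}\ S]\!]=[\![S]\!]^N$; $[\![\mathbf{case}\ldots]\!](\rho)=\sum_\omega[\![S_\omega]\!](\mathcal M_\omega(\rho))$; $[\![\mathbf{while}\ B[\vec q]\ \mathbf{do}\ S]\!](\rho)=\sum_{k\ge0}(\mathcal B_{0,\vec q}\circ([\![S]\!]\circ\mathcal B_{1,\vec q})^k)(\rho)$. Hoare triples: $\models_{\mathrm{tot}}\{P\}S\{Q\}$ iff $\operatorname{tr}(P\rho)\le\operatorname{tr}(Q[\![S]\!](\rho))$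 for all partial states $\rho$; $\models_{\mathrm{par}}\{P\}S\{Q\}$ iff $\operatorname{tr}(P\rho)\le\operatorname{tr}(Q[\![S]\!](\rho))+\operatorname{tr}\rho-\operatorname{tr}[\![S]\!](\rho)$ for all partial states $\rho$. Syntactic sugar: $\mathbf{if}\ B[\vec q]\ \mathbf{then}\ S_1\ \mathbf{else}\ S_0$ abbreviates $\mathbf{case}\ \{1:B,0:I-B\}[\vec q]\ \mathbf{of}\ \{1:S_1,0:S_0\}$; omitting else means $S_0=\mathbf{skip}$. Programs with holes. The grammar is extended by holes $\{P\}\,\square\,\{Q\}$ ($P,Q$ predicates); more generally a hole may carry a family of specifications $\{P_\lambda\}\,\square\,\{Q_\lambda\}$, $\lambda\in\Lambda$ (written e.g. $\{P,P'\}\square\{Q,Q'\}$ for two). A program without holes is concrete. A refinement rule applied to a hole with a family must have its side conditions satisfied for every $\lambda$; the predicates it introduces may depend on $\lambda$, but the syntactic program produced (variables, unitaries, measurements, $N$, $B$) is the same for all $\lambda$; holes it creates carry the families indexed by $\lambda$ together with any newly introduced index. Refinement for partial correctness $\hookrightarrow_{\mathrm{par}}$ (for predicates $P,Q$): (H.skip) $\{P\}\square\{Q\}\hookrightarrow\mathbf{skip}$ if $P\Rightarrow Q$; (H.init) $\{P\}\square\{Q\}\hookrightarrow\vec q:=|0\rangle$ if $P\Rightarrow\sum_{x\in\Sigma_{\vec q}}|x\rangle\langle0|_{\vec q}Q|0\rangle\langle x|_{\vec q}$; (H.unit) $\{P\}\square\{Q\}\hookrightarrow\vec q\mathrel{*}=U$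 if $P\Rightarrow U_{\vec q}^\dagger QU_{\vec q}$; (H.seq) $\{P\}\square\{Q\}\hookrightarrow\{P\}\square\{R\};\{R\}\square\{Q\}$ for any predicate $R$; (HP.split) $\{P\}\square\{Q\}\hookrightarrow\{P_\gamma\}\square\{Q_\gamma\}$ ($\gamma\in\Gamma$) if $P\Rightarrow\sum_\gamma p_\gamma P_\gamma$ and $\sum_\gamma p_\gamma Q_\gamma\Rightarrow Q$ for a probability distribution $(p_\gamma)$; (H.repeat) $\{P\}\square\{Q\}\hookrightarrow\mathbf{repeat}\ N\ \mathbf{do}\ \{R_j\}\square\{R_{j+1}\}$ (family over $j\in\{0,\dots,N-1\}$) for predicates $R_0,\dots,R_N$ with $P\Rightarrow R_0$, $R_N\Rightarrow Q$; (H.case) $\{P\}\square\{Q\}\hookrightarrow\mathbf{case}\ \vec M[\vec q]\ \mathbf{of}\ \{\omega:\{P_\omega\}\square\{Q\}\}_{\omega}$ if $P\Rightarrow\sum_\omega\mathcal M_\omega(P_\omega)$; (HP.while) $\{P\}\square\{Q\}\hookrightarrow\mathbf{while}\ B[\vec q]\ \mathbf{do}\ \{R\}\square\{\mathcal B_{0,\vec q}(Q)+\mathcal B_{1,\vec q}(R)\}$ for a predicate $R$ with $P\Rightarrow\mathcal B_{0,\vec q}(Q)+\mathcal B_{1,\vec q}(R)$. Composite rules: (C.seqL/C.seqR/C.repeat/C.case/C.while) if $S'\hookrightarrow S$ then replacing one occurrence of $S'$ as the left or right component of a sequence, the body of a repeat, one branch of a case, or the body of a while by $S$ is a refinement step.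 Refinement for total correctness $\hookrightarrow_{\mathrm{tot}}$ uses all (H.* ) and (C.* ) rules above but replaces (HP.while) by (HT.while): $\{P\}\square\{Q\}\hookrightarrow\mathbf{while}\ B[\vec q]\ \mathbf{do}\ \{R_{n+1}\}\square\{\mathcal B_{0,\vec q}(Q)+\mathcal B_{1,\vec q}(R_n)\}$ (family over $n\in\mathbb N$) for predicates $(R_n)_{n\in\mathbb N}$ with $R_0=0$, $R_n\Rightarrow R_{n+1}$, whose limit $R=\lim_n R_n$ satisfies $P\Rightarrow\mathcal B_{0,\vec q}(Q)+\mathcal B_{1,\vec q}(R)$; and replaces (HP.split) by (HT.split), identical except that $(p_\gamma)$ need only be nonnegative reals. $\hookrightarrow^k$ denotes $k$ steps and $\hookrightarrow^*$ the reflexive-transitive closure. *)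

From HB Require Import structures.
From mathcomp Require Import all_boot all_order all_algebra.
From mathcomp Require Import complex spectral.
From mathcomp Require Import classical_sets filter reals topology normedtype sequences.
From Stdlib Require Import ClassicalEpsilon.
Import Order.TTheory GRing.Theory Num.Theory.
Import numFieldNormedType.Exports.

Set Implicit Arguments.
Unset Strict Implicit.
Unset Printing Implicit Defensive.

Local Open Scope ring_scope.
Local Open Scope sesquilinear_scope.

(* The finite set qVars of quantum variables is a finType V; variable q has  *)
(* classical state space Sigma_q = 'I_(d q).+1, whose element ord0 is the     *)
(* basis label "0" used by initialisation.                                    *)

(* standard basis labels of the whole system H = H_qVars *)
Definition gidx (V : finType) (d : V -> nat) : finType :=
  {dffun forall v : V, 'I_(d v).+1}.

(* standard basis labels of H_vq, for a set vq of variables *)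
Definition lidx (V : finType) (d : V -> nat) (vq : {set V}) : finType :=
  {dffun forall v : {x : V | x \in vq}, 'I_(d (sval v)).+1}.

(* operators on a Hilbert space with standard basis labelled by T *)
Definition op (R : realType) (T : finType) := 'M[R[i]]_#|T|.

Definition gop (R : realType) (V : finType) (d : V -> nat) := op R (gidx d).
Definition lop (R : realType) (V : finType) (d : V -> nat) (vq : {set V}) :=
  op R (lidx d vq).

Definition restr (V : finType) (d : V -> nat) (vq : {set V}) (x : gidx d)
  : lidx d vq := [ffun v => x (sval v)].

(* A_vq = A (x) I on H, for A an operator on H_vq *)
Definition lift (R : realType) (V : finType) (d : V -> nat) (vq : {set V})
    (A : lop R d vq) : gop R d :=
  \matrix_(i, j)
    (let x : gidx d := enum_val i in let y : gidx d := enum_val j in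
     if [forall v, (v \notin vq) ==> (x v == y v)]
     then A (enum_rank (restr vq x)) (enum_rank (restr vq y))
     else 0).

Definition ketbra (R : realType) (V : finType) (d : V -> nat) (vq : {set V})
    (x y : lidx d vq) : lop R d vq :=
  delta_mx (enum_rank x) (enum_rank y).

Definition lzero (V : finType) (d : V -> nat) (vq : {set V}) : lidx d vq :=
  [ffun v => ord0].

Definition psd (R : realType) (n : nat) (A : 'M[R[i]]_n) : Prop :=
  forall u : 'cV[R[i]]_n, 0 <= (u ^t* *m A *m u) ord0 ord0.

Definition lowner (R : realType) (n : nat) (A B : 'M[R[i]]_n) : Prop :=
  psd (B - A).

Definition is_pred (R : realType) (n : nat) (P : 'M[R[i]]_n) : Prop :=
  psd P /\ lowner P 1%:M.

Definition pstate (R : realType) (n : nat) (rho : 'M[R[i]]_n) : Prop :=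
  psd rho /\ \tr rho <= 1.

(* the positive semidefinite square root (chosen; unique when A is psd) *)
Definition sqrtmx (R : realType) (n : nat) (A : 'M[R[i]]_n) : 'M[R[i]]_n :=
  epsilon (inhabits 0) (fun X => psd X /\ X *m X = A).

Definition is_meas (R : realType) (n k : nat) (M : 'I_k -> 'M[R[i]]_n) : Prop :=
  (forall w, psd (M w)) /\ \sum_(w < k) M w = 1%:M.

Definition is_binmeas (R : realType) (n : nat) (B : 'M[R[i]]_n) : Prop :=
  psd B /\ lowner B 1%:M.

Definition Mop (R : realType) (V : finType) (d : V -> nat) (vq : {set V})
    (A : lop R d vq) (X : gop R d) : gop R d :=
  lift (sqrtmx A) *m X *m lift (sqrtmx A).

Definition B0op (R : realType) (V : finType) (d : V -> nat) (vq : {set V})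
    (B : lop R d vq) (X : gop R d) : gop R d := Mop (1%:M - B) X.

Definition B1op (R : realType) (V : finType) (d : V -> nat) (vq : {set V})
    (B : lop R d vq) (X : gop R d) : gop R d := Mop B X.

Definition initop (R : realType) (V : finType) (d : V -> nat) (vq : {set V})
    (X : gop R d) : gop R d :=
  \sum_(x : lidx d vq)
     lift (ketbra R (lzero d vq) x) *m X *m lift (ketbra R x (lzero d vq)).

(* weakest-precondition-like transformer of H.init:
   sum_x |x><0|_vq Q |0><x|_vq *)
Definition initpre (R : realType) (V : finType) (d : V -> nat) (vq : {set V})
    (Q : gop R d) : gop R d :=
  \sum_(x : lidx d vq)
     lift (ketbra R x (lzero d vq)) *m Q *m lift (ketbra R (lzero d vq) x).

(* Programs with holes.  A hole carries a family of specifications           *)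
(* {P l} [] {Q l}, l : Lam, for an arbitrary index type Lam.                 *)
Inductive prog (R : realType) (V : finType) (d : V -> nat) : Type :=
| Skip
| Init (vq : {set V})
| Unit (vq : {set V}) (U : lop R d vq) of U \is unitarymx
| Seq of prog R d & prog R d
| Repeat of nat & prog R d
| Case (vq : {set V}) (k : nat) (M : 'I_k -> lop R d vq) of is_meas M
       & ('I_k -> prog R d)
| While (vq : {set V}) (B : lop R d vq) of is_binmeas B & prog R d
| Hole (Lam : Type) (P Q : Lam -> gop R d).

Arguments Skip {R V d}.
Arguments Init {R V d}.
Arguments Hole {R V d}.

Fixpoint concrete (R : realType) (V : finType) (d : V -> nat) (S : prog R d)
    : Prop :=
  match S with
  | Skip | Init _ | Unit _ _ _ => True
  | Seq S1 S2 => concrete S1 /\ concrete S2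
  | Repeat _ S1 => concrete S1
  | Case _ _ _ _ br => forall w, concrete (br w)
  | While _ _ _ S1 => concrete S1
  | Hole _ _ _ => False
  end.

(* entrywise limit of a sequence of complex matrices (real and imaginary
   parts taken separately); it is the limit whenever the sequence converges *)
Definition mxlim (R : realType) (m n : nat) (u : nat -> 'M[R[i]]_(m, n))
    : 'M[R[i]]_(m, n) :=
  \matrix_(i, j)
    (Complex (limn (fun k => complex.Re (u k i j)))
             (limn (fun k => complex.Im (u k i j)))).

(* denotational semantics (holes are given the zero map; only concrete
   programs are ever interpreted) *)
Fixpoint sem (R : realType) (V : finType) (d : V -> nat) (S : prog R d)
    (rho : gop R d) : gop R d :=
  match S with
  | Skip => rho
  | Init vq => initop vq rho
  | Unit vq U _ => lift U *m rho *m lift (U ^t*)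
  | Seq S1 S2 => sem S2 (sem S1 rho)
  | Repeat N S1 => iter N (sem S1) rho
  | Case vq k M _ br => \sum_(w < k) sem (br w) (Mop (M w) rho)
  | While vq B _ S1 =>
      mxlim (fun n => \sum_(k < n)
               B0op B (iter k (fun X => sem S1 (B1op B X)) rho))
  | Hole _ _ _ => 0
  end.

Definition par_valid (R : realType) (V : finType) (d : V -> nat)
    (P : gop R d) (S : prog R d) (Q : gop R d) : Prop :=
  forall rho : gop R d, pstate rho ->
    \tr (P *m rho) <= \tr (Q *m sem S rho) + \tr rho - \tr (sem S rho).

Inductive refine_par (R : realType) (V : finType) (d : V -> nat)
  : prog R d -> prog R d -> Prop :=
| HP_skip (Lam : Type) (P Q : Lam -> gop R d) :
    (forall l, lowner (P l) (Q l)) ->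
    refine_par (Hole Lam P Q) Skip
| HP_init (Lam : Type) (P Q : Lam -> gop R d) (vq : {set V}) :
    (forall l, lowner (P l) (initpre vq (Q l))) ->
    refine_par (Hole Lam P Q) (Init vq)
| HP_unit (Lam : Type) (P Q : Lam -> gop R d) (vq : {set V}) (U : lop R d vq)
    (hU : U \is unitarymx) :
    (forall l, lowner (P l) (lift (U ^t*) *m Q l *m lift U)) ->
    refine_par (Hole Lam P Q) (Unit hU)
| HP_seq (Lam : Type) (P Q Rm : Lam -> gop R d) :
    (forall l, is_pred (Rm l)) ->
    refine_par (Hole Lam P Q) (Seq (Hole Lam P Rm) (Hole Lam Rm Q))
| HP_split (Lam : Type) (P Q : Lam -> gop R d) (G : finType)
    (P' Q' : Lam * G -> gop R d) :
    (forall lg, is_pred (P' lg) /\ is_pred (Q' lg)) ->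
    (forall l, exists p : G -> R,
        (forall g, 0 <= p g) /\ \sum_g p g = 1 /\
        lowner (P l) (\sum_g (Complex (p g) 0) *: P' (l, g)) /\
        lowner (\sum_g (Complex (p g) 0) *: Q' (l, g)) (Q l)) ->
    refine_par (Hole Lam P Q) (Hole (Lam * G)%type P' Q')
| HP_repeat (Lam : Type) (P Q : Lam -> gop R d) (N : nat)
    (Rm : Lam -> nat -> gop R d) :
    (forall l j, (j <= N)%N -> is_pred (Rm l j)) ->
    (forall l, lowner (P l) (Rm l 0%N)) ->
    (forall l, lowner (Rm l N) (Q l)) ->
    refine_par (Hole Lam P Q)
      (Repeat N (Hole (Lam * 'I_N)%type
                   (fun lj => Rm lj.1 (val lj.2))
                   (fun lj => Rm lj.1 (val lj.2).+1)))
| HP_case (Lam : Type) (P Q : Lam -> gop R d) (vq : {set V}) (k : nat)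
    (M : 'I_k -> lop R d vq) (hM : is_meas M) (Pw : Lam -> 'I_k -> gop R d) :
    (forall l w, is_pred (Pw l w)) ->
    (forall l, lowner (P l) (\sum_(w < k) Mop (M w) (Pw l w))) ->
    refine_par (Hole Lam P Q)
      (Case hM (fun w => Hole Lam (fun l => Pw l w) Q))
| HP_while (Lam : Type) (P Q : Lam -> gop R d) (vq : {set V})
    (B : lop R d vq) (hB : is_binmeas B) (Rm : Lam -> gop R d) :
    (forall l, is_pred (Rm l)) ->
    (forall l, lowner (P l) (B0op B (Q l) + B1op B (Rm l))) ->
    refine_par (Hole Lam P Q)
      (While hB (Hole Lam Rm (fun l => B0op B (Q l) + B1op B (Rm l))))
| C_seqL (S1 S1' S2 : prog R d) :
    refine_par S1 S1' -> refine_par (Seq S1 S2) (Seq S1' S2)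
| C_seqR (S1 S2 S2' : prog R d) :
    refine_par S2 S2' -> refine_par (Seq S1 S2) (Seq S1 S2')
| C_repeat (N : nat) (S1 S1' : prog R d) :
    refine_par S1 S1' -> refine_par (Repeat N S1) (Repeat N S1')
| C_case (vq : {set V}) (k : nat) (M : 'I_k -> lop R d vq) (hM : is_meas M)
    (br : 'I_k -> prog R d) (w : 'I_k) (S' : prog R d) :
    refine_par (br w) S' ->
    refine_par (Case hM br) (Case hM (fun w' => if w' == w then S' else br w'))
| C_while (vq : {set V}) (B : lop R d vq) (hB : is_binmeas B) (S1 S1' : prog R d) :
    refine_par S1 S1' -> refine_par (While hB S1) (While hB S1').

Inductive refine_par_star (R : realType) (V : finType) (d : V -> nat)
  : prog R d -> prog R d -> Prop :=
| rps_refl (S : prog R d) : refine_par_star S S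
| rps_step (S1 S2 S3 : prog R d) :
    refine_par S1 S2 -> refine_par_star S2 S3 -> refine_par_star S1 S3.

Definition hole1 (R : realType) (V : finType) (d : V -> nat) (P Q : gop R d)
  : prog R d := Hole unit (fun _ => P) (fun _ => Q).

(* Soundness is proved backwards along the refinement sequence.  Call a
   concrete program [T] a realization of a program with holes [S] when [T] is
   [S] with every hole replaced by a concrete program satisfying all the
   specifications carried by that hole.  A concrete program realizes itself,
   and a refinement step [S1 ~> S2] turns realizations of [S2] into
   realizations of [S1]: for the refined hole this is the soundness of the
   partial-correctness rule used.  So [S] realizes [{P} [] {Q}].

   The only non-routine rule is the one for loops.  A loop denotes the limit
   of the Loewner-increasing partial sums [T_n] of its terminating branches,
   whose traces are bounded, so they converge entrywise (polarization reduces
   this to monotone real sequences).  With [X = B0(Q) + B1(R)] and [rho_n] the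
   state after [n] rounds, the invariant
     tr(X rho) - tr rho <= (tr(Q T_n) - tr T_n) + (tr(X rho_n) - tr rho_n)
   passes to the limit because [X <= I]; this is why every refinement step is
   checked to keep the postconditions of holes below [I]. *)

From HB Require Import structures.
From mathcomp Require Import all_boot all_order all_algebra.
From mathcomp Require Import complex spectral.
From mathcomp Require Import boolp classical_sets filter reals topology normedtype sequences.
From mathcomp Require Import ring lra.
From Stdlib Require Import ClassicalEpsilon.
Import Order.TTheory GRing.Theory Num.Theory Num.Def.
Import numFieldNormedType.Exports.

Set Implicit Arguments.
Unset Strict Implicit.
Unset Printing Implicit Defensive.

Local Open Scope ring_scope.
Local Open Scope sesquilinear_scope.

Section PsdMatrix.
Variable R : realType.
Local Notation C := R[i].

Definition qform n (A : 'M[C]_n) (u : 'cV[C]_n) : C := (u ^t* *m A *m u) ord0 ord0.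

Definition evec n (i : 'I_n) : 'cV[C]_n := delta_mx i ord0.

Lemma adjmxD m n (A B : 'M[C]_(m, n)) : (A + B) ^t* = A ^t* + B ^t*.
Proof. by apply/matrixP => a b; rewrite !mxE rmorphD. Qed.

Lemma adjmxZ m n c (A : 'M[C]_(m, n)) : (c *: A) ^t* = c^* *: A ^t*.
Proof. by apply/matrixP => a b; rewrite !mxE rmorphM. Qed.

Lemma adjmxM m n p (A : 'M[C]_(m, n)) (B : 'M[C]_(n, p)) :
  (A *m B) ^t* = B ^t* *m A ^t*.
Proof. by rewrite trmx_mul map_mxM. Qed.

Lemma adjmx_delta m n (a : 'I_m) (b : 'I_n) :
  (delta_mx a b : 'M[C]_(m, n)) ^t* = delta_mx b a.
Proof.
by apply/matrixP => i j; rewrite !mxE; do 2 case: eqP => _ /=; rewrite ?conjC0 ?conjC1.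
Qed.

Lemma evec_adj_mul n (A : 'M[C]_n) i j : (evec i) ^t* *m A *m evec j = (A i j)%:M.
Proof. by rewrite [LHS]mx11_scalar adjmx_delta -rowE -colE !mxE. Qed.

Lemma qform_evec n (A : 'M[C]_n) i : qform A (evec i) = A i i.
Proof. by rewrite /qform evec_adj_mul mxE. Qed.

Lemma qform_evecD n (A : 'M[C]_n) i j c :
  qform A (evec i + c *: evec j) =
  A i i + c * A i j + c^* * A j i + c^* * c * A j j.
Proof.
rewrite /qform adjmxD adjmxZ !mulmxDl !mulmxDr -!scalemxAl -!scalemxAr.
by rewrite !evec_adj_mul !mxE /= !mulrA; ring.
Qed.

Lemma qformE n (A : 'M[C]_n) u :
  qform A u = \sum_i \sum_j (u i ord0)^* * A i j * u j ord0.
Proof.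
rewrite /qform mxE exchange_big /=; apply: eq_bigr => j _.
by rewrite mxE mulr_suml; apply: eq_bigr => i _; rewrite !mxE.
Qed.

Lemma qformB n (A B : 'M[C]_n) u : qform (A - B) u = qform A u - qform B u.
Proof. by rewrite /qform mulmxBr mulmxBl !mxE. Qed.

Lemma psd_diag_ge0 n (A : 'M[C]_n) i : psd A -> 0 <= A i i.
Proof. by move=> hA; rewrite -qform_evec; apply: hA. Qed.

(* Positivity of the forms at [e_j + e_i] and [e_j + 'i e_i] makes
   [A j i + A i j] and ['i (A j i - A i j)] real. *)
Lemma psd_hermitian n (A : 'M[C]_n) : psd A -> A ^t* = A.
Proof.
move=> hA; have diagR k : (A k k)^* = A k k.
  by apply/CrealP/ger0_real/psd_diag_ge0.
have offR i j c : (c * A i j + c^* * A j i)^* = c * A i j + c^* * A j i.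
  have /ger0_real/CrealP := hA (evec i + c *: evec j).
  have djj : (c^* * c * A j j)^* = c^* * c * A j j.
    by rewrite !rmorphM /= conjCK diagR [c * _]mulrC.
  rewrite -/(qform _ _) qform_evecD -!addrA !rmorphD /= diagR djj.
  by move/addrI; rewrite !addrA => /addIr.
apply/matrixP => i j; rewrite !mxE.
have := offR j i 1; have := offR j i 'i.
rewrite !rmorphD !rmorphM /= conjCK conjCi !rmorph1 !mul1r !mulNr => eI e1.
have eI' : (A i j)^* - (A j i)^* = A j i - A i j.
  by apply: (mulfI (neq0Ci C)); rewrite !mulrBr addrC eI.
have two_neq0 : 2 != 0 :> C by rewrite pnatr_eq0.
apply: (mulfI two_neq0); transitivity (((A j i)^* + (A i j)^*) - ((A i j)^* - (A j i)^*)).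
  by ring.
by rewrite e1 eI'; ring.
Qed.

Lemma psd_congr m n (K : 'M[C]_(n, m)) (X : 'M[C]_m) :
  psd X -> psd (K *m X *m K ^t*).
Proof. by move=> hX u; have := hX (K ^t* *m u); rewrite adjmxM trmxCK !mulmxA. Qed.

Lemma psd_congr_adj m n (K : 'M[C]_(m, n)) (X : 'M[C]_m) :
  psd X -> psd (K ^t* *m X *m K).
Proof. by move=> /(psd_congr (K ^t*)); rewrite trmxCK. Qed.

Lemma psd0 n : psd (0 : 'M[C]_n).
Proof. by move=> u; rewrite mulmx0 mul0mx mxE. Qed.

Lemma psdD n (A B : 'M[C]_n) : psd A -> psd B -> psd (A + B).
Proof. by move=> hA hB u; rewrite mulmxDr mulmxDl mxE addr_ge0. Qed.

Lemma psd_sum n (I : Type) (r : seq I) (P : pred I) (F : I -> 'M[C]_n) :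
  (forall i, P i -> psd (F i)) -> psd (\sum_(i <- r | P i) F i).
Proof. by move=> hF; apply: (big_ind (@psd R n)); [exact: psd0|exact: psdD|]. Qed.

Lemma psd_diag_mx n (a : 'rV[C]_n) : (forall i, 0 <= a ord0 i) -> psd (diag_mx a).
Proof.
move=> ha u; rewrite -/(qform _ _) qformE; apply: sumr_ge0 => i _.
rewrite (bigD1 i) //= big1 ?addr0; last first.
  by move=> j /negPf ji; rewrite !mxE eq_sym ji mulr0n mulr0 mul0r.
by rewrite !mxE eqxx mulr1n mulrAC mulr_ge0 // mulrC mul_conjC_ge0.
Qed.

Lemma psd_outer n (u : 'cV[C]_n) : psd (u *m u ^t*).
Proof.
have -> : u *m u ^t* = u *m 1%:M *m u ^t* by rewrite mulmx1.
apply: psd_congr => v; rewrite -/(qform _ _) qformE !big_ord1 !mxE eqxx mulr1.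
by rewrite mulrC mul_conjC_ge0.
Qed.

(* Spectral theorem: [A = P^* D P] with [P] unitary and [D] nonnegative
   diagonal; take [P^* sqrt(D) P]. *)
Lemma psd_sqrt_exists n (A : 'M[C]_n) : psd A -> exists S, psd S /\ S *m S = A.
Proof.
move=> hA; have /orthomx_spectralP : A \is normalmx.
  by apply/normalmxP; rewrite psd_hermitian.
set P := spectralmx A; set D := spectral_diag A => eA.
have PPt : P *m P ^t* = 1%:M by apply/unitarymxP/spectral_unitarymx.
rewrite invmx_unitary ?spectral_unitarymx // in eA.
have D_ge0 i : 0 <= D ord0 i.
  have : psd (diag_mx D).
    have <- : P *m A *m P ^t* = diag_mx D.
      by rewrite eA !mulmxA PPt mul1mx -mulmxA PPt mulmx1.
    exact: psd_congr.
  by move/(psd_diag_ge0 i); rewrite mxE eqxx mulr1n.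
pose sqD := \row_i sqrtC (D ord0 i).
exists (P ^t* *m diag_mx sqD *m P); split.
  apply: psd_congr_adj; apply: psd_diag_mx => i; by rewrite mxE sqrtC_ge0.
rewrite -!mulmxA (mulmxA P) PPt mul1mx (mulmxA (diag_mx sqD)) mulmx_diag.
have -> : \row_j (sqD 0 j * sqD 0 j) = D.
  by apply/matrixP => i j; rewrite !mxE -expr2 sqrtCK (ord1 i).
by rewrite [in RHS]eA mulmxA.
Qed.

Lemma sqrtmxP n (A : 'M[C]_n) : psd A -> psd (sqrtmx A) /\ sqrtmx A *m sqrtmx A = A.
Proof. by move=> /psd_sqrt_exists; apply: epsilon_spec. Qed.

Lemma psd_trace_ge0 n (A : 'M[C]_n) : psd A -> 0 <= \tr A.
Proof. by move=> hA; apply: sumr_ge0 => i _; apply: psd_diag_ge0. Qed.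

Lemma psd_trace_mul_ge0 n (A B : 'M[C]_n) : psd A -> psd B -> 0 <= \tr (A *m B).
Proof.
move=> hA /sqrtmxP[hS <-].
rewrite mulmxA mxtrace_mulC mulmxA -{1}(psd_hermitian hS).
exact/psd_trace_ge0/psd_congr_adj.
Qed.

Lemma psd_trace_outerP n (A : 'M[C]_n) :
  (forall u : 'cV[C]_n, 0 <= \tr (A *m (u *m u ^t*))) -> psd A.
Proof.
by move=> h u; have := h u; rewrite mulmxA mxtrace_mulC mulmxA /mxtrace big_ord1.
Qed.

Lemma mxtrace_mulN n (A Y : 'M[C]_n) : \tr (A *m - Y) = - \tr (A *m Y).
Proof. by rewrite mulmxN raddfN. Qed.

Lemma mxtrace_sum n (I : Type) (r : seq I) (P : pred I) (F : I -> 'M[C]_n) :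
  \tr (\sum_(i <- r | P i) F i) = \sum_(i <- r | P i) \tr (F i).
Proof. exact: raddf_sum. Qed.

Lemma lowner_trace n (P Q rho : 'M[C]_n) :
  lowner P Q -> psd rho -> \tr (P *m rho) <= \tr (Q *m rho).
Proof. by move=> hPQ hr; rewrite -subr_ge0 -linearB -mulmxBl psd_trace_mul_ge0. Qed.

Lemma lownerD n (A B A' B' : 'M[C]_n) :
  lowner A B -> lowner A' B' -> lowner (A + A') (B + B').
Proof.
move=> h h'; rewrite /lowner.
have -> : B + B' - (A + A') = (B - A) + (B' - A') by rewrite opprD addrACA.
exact: psdD h h'.
Qed.

End PsdMatrix.

Arguments evec {R n} i.

Section Lift.
Variables (R : realType) (V : finType) (d : V -> nat) (vq : {set V}).
Local Notation C := R[i].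
Local Notation G := (gidx d).
Local Notation L := (lidx d vq).

Definition agree_off (x y : G) := [forall v, (v \notin vq) ==> (x v == y v)].

Lemma agree_off_refl x : agree_off x x.
Proof. by apply/forallP => v; apply/implyP. Qed.

Lemma agree_offC x y : agree_off x y = agree_off y x.
Proof.
by apply/forallP/forallP => h v; apply/implyP => hv; rewrite eq_sym (implyP (h v)).
Qed.

Lemma agree_off_trans x y z : agree_off x y -> agree_off y z -> agree_off x z.
Proof.
move=> /forallP hxy /forallP hyz; apply/forallP => v; apply/implyP => hv.
by rewrite (eqP (implyP (hxy v) hv)) (implyP (hyz v)).
Qed.

Definition glue (x : G) (w : L) : G :=
  [ffun v => if v \in vq =P true is ReflectT h then w (exist _ v h) else x v].

Lemma glue_in x w v (h : v \in vq) : glue x w v = w (exist _ v h).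
Proof.
by rewrite ffunE; destruct (v \in vq =P true) as [h'|]; rewrite ?(bool_irrelevance h' h).
Qed.

Lemma glue_out x w v : v \notin vq -> glue x w v = x v.
Proof. by move=> hv; rewrite ffunE; destruct (v \in vq =P true) as [h|]; rewrite ?h in hv. Qed.

Lemma restr_glue x w : restr vq (glue x w) = w.
Proof. by apply/ffunP => -[v h]; rewrite ffunE glue_in. Qed.

Lemma agree_off_glue x w : agree_off x (glue x w).
Proof. by apply/forallP => v; apply/implyP => h; rewrite glue_out. Qed.

Lemma glue_restr x z : agree_off x z -> glue x (restr vq z) = z.
Proof.
move=> /forallP hxz; apply/ffunP => v; case: (boolP (v \in vq)) => h.
  by rewrite glue_in ffunE.
by rewrite glue_out // (eqP (implyP (hxz v) h)).
Qed.

Lemma agree_off_restr_inj x y : agree_off x y -> restr vq x = restr vq y -> x = y.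
Proof. by move=> hxy e; rewrite -(glue_restr hxy) -e glue_restr // agree_off_refl. Qed.

Lemma sum_agree_off x (F : L -> C) :
  \sum_(z : G | agree_off x z) F (restr vq z) = \sum_(w : L) F w.
Proof.
rewrite (reindex (glue x)) /=; first by apply: eq_big => w; rewrite ?agree_off_glue ?restr_glue.
by exists (restr vq) => z; rewrite inE => h; [exact: restr_glue|exact: glue_restr].
Qed.

Lemma liftE (A : lop R d vq) x y :
  lift A (enum_rank x) (enum_rank y) =
  if agree_off x y then A (enum_rank (restr vq x)) (enum_rank (restr vq y)) else 0.
Proof. by rewrite mxE !enum_rankK. Qed.

Lemma gop_ext (M N : gop R d) :
  (forall x y : G, M (enum_rank x) (enum_rank y) = N (enum_rank x) (enum_rank y)) ->
  M = N.
Proof. by move=> h; apply/matrixP => i j; rewrite -(enum_valK i) -(enum_valK j). Qed.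

Lemma sum_enum_rank (M : nmodType) (T : finType) (F : 'I_#|T| -> M) :
  \sum_k F k = \sum_(t : T) F (enum_rank t).
Proof. by rewrite (reindex enum_rank) //; apply/onW_bij/enum_rank_bij. Qed.

Lemma lift_mul (A B : lop R d vq) : lift A *m lift B = lift (A *m B).
Proof.
apply: gop_ext => x y; rewrite liftE mxE sum_enum_rank.
have [hxy|hxy] := boolP (agree_off x y).
  rewrite mxE sum_enum_rank -(sum_agree_off x) [RHS]big_mkcond /=.
  apply: eq_bigr => z _; rewrite !liftE.
  case: (boolP (agree_off x z)) => hxz; last by rewrite mul0r.
  by rewrite (agree_off_trans _ hxy) // agree_offC.
apply: big1 => z _; rewrite !liftE.
case: (boolP (agree_off x z)) => hxz; last by rewrite mul0r.
case: (boolP (agree_off z y)) => hzy; last by rewrite mulr0.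
by rewrite (agree_off_trans hxz hzy) in hxy.
Qed.

Lemma liftD (A B : lop R d vq) : lift (A + B) = lift A + lift B.
Proof.
by apply: gop_ext => x y; rewrite liftE [RHS]mxE !liftE; case: agree_off; rewrite ?mxE ?addr0.
Qed.

Lemma lift0 : lift (0 : lop R d vq) = 0.
Proof. by apply: gop_ext => x y; rewrite liftE !mxE; case: agree_off. Qed.

Lemma lift_sum (I : Type) (r : seq I) (P : pred I) (F : I -> lop R d vq) :
  lift (\sum_(i <- r | P i) F i) = \sum_(i <- r | P i) lift (F i).
Proof. exact: (big_morph _ liftD lift0). Qed.

Lemma lift1 : lift (1%:M : lop R d vq) = 1%:M.
Proof.
apply: gop_ext => x y; rewrite liftE !mxE !(inj_eq enum_rank_inj).
have [->|nxy] := eqVneq x y; first by rewrite agree_off_refl eqxx.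
case: (boolP (agree_off x y)) => // hxy; case: eqP => // e.
by case/eqP: nxy; apply: agree_off_restr_inj.
Qed.

Lemma lift_adj (A : lop R d vq) : lift (A ^t*) = (lift A) ^t*.
Proof.
apply: gop_ext => x y; rewrite !mxE !enum_rankK /=.
by rewrite -/(agree_off x y) -/(agree_off y x) agree_offC; case: agree_off; rewrite ?mxE ?conjC0.
Qed.

End Lift.

Section QuantumOperations.
Variables (R : realType) (V : finType) (d : V -> nat).
Local Notation C := R[i].
Local Notation gop := (gop R d).

Lemma trace_congr m n (Q : 'M[C]_n) (K : 'M[C]_(n, m)) (X : 'M[C]_m) :
  \tr (Q *m (K *m X *m K ^t*)) = \tr ((K ^t* *m Q *m K) *m X).
Proof. by rewrite !mulmxA mxtrace_mulC !mulmxA. Qed.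

Section Sandwich.
Variables (vq : {set V}) (A : lop R d vq).
Hypothesis A_psd : psd A.

Lemma adj_lift_sqrtmx : (lift (sqrtmx A)) ^t* = lift (sqrtmx A).
Proof. by rewrite -lift_adj psd_hermitian //; case: (sqrtmxP A_psd). Qed.

Lemma Mop_congr X : Mop A X = lift (sqrtmx A) *m X *m (lift (sqrtmx A)) ^t*.
Proof. by rewrite adj_lift_sqrtmx. Qed.

Lemma Mop_psd X : psd X -> psd (Mop A X).
Proof. by rewrite Mop_congr; apply: psd_congr. Qed.

Lemma trace_Mop_dual (Q X : gop) : \tr (Q *m Mop A X) = \tr (Mop A Q *m X).
Proof. by rewrite !Mop_congr trace_congr adj_lift_sqrtmx. Qed.

Lemma Mop1 : Mop A 1%:M = lift A.
Proof. by rewrite /Mop mulmx1 lift_mul; case: (sqrtmxP A_psd) => _ ->. Qed.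

Lemma trace_Mop (X : gop) : \tr (Mop A X) = \tr (lift A *m X).
Proof. by rewrite -[Mop A X]mul1mx trace_Mop_dual Mop1. Qed.

Lemma Mop_lowner (X Y : gop) : lowner X Y -> lowner (Mop A X) (Mop A Y).
Proof. by move=> /Mop_psd; rewrite /lowner /Mop mulmxBr mulmxBl. Qed.

End Sandwich.

Lemma meas_psd vq k (M : 'I_k -> lop R d vq) w : is_meas M -> psd (M w).
Proof. by case=> /(_ w). Qed.

Lemma meas_trace vq k (M : 'I_k -> lop R d vq) (X : gop) :
  is_meas M -> \sum_(w < k) \tr (Mop (M w) X) = \tr X.
Proof.
move=> hM; under eq_bigr => w _ do rewrite (trace_Mop (meas_psd w hM)).
by rewrite -mxtrace_sum -mulmx_suml -lift_sum hM.2 lift1 mul1mx.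
Qed.

Lemma binmeas_trace vq (B : lop R d vq) (X : gop) : is_binmeas B ->
  \tr (B0op B X) + \tr (B1op B X) = \tr X.
Proof.
case=> hB hB'; rewrite /B0op /B1op (trace_Mop hB) (trace_Mop hB') -mxtraceD -mulmxDl.
by rewrite -liftD subrK lift1 mul1mx.
Qed.

Lemma binmeas_lowner1 vq (B : lop R d vq) (Q Rm : gop) : is_binmeas B ->
  lowner Q 1%:M -> lowner Rm 1%:M -> lowner (B0op B Q + B1op B Rm) 1%:M.
Proof.
case=> hB hB' hQ hRm; have -> : (1%:M : gop) = B0op B 1%:M + B1op B 1%:M.
  by rewrite /B0op /B1op !Mop1 // -liftD subrK lift1.
by apply: lownerD; apply: Mop_lowner.
Qed.

Section Init.
Variable vq : {set V}.

Let K (x : lidx d vq) : gop := lift (ketbra R (lzero d vq) x).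

Let adjK x : (K x) ^t* = lift (ketbra R x (lzero d vq)).
Proof. by rewrite -lift_adj /ketbra adjmx_delta. Qed.

Let initopE (X : gop) : initop vq X = \sum_x K x *m X *m (K x) ^t*.
Proof. by apply: eq_bigr => x _; rewrite adjK. Qed.

Let initpreE (Q : gop) : initpre vq Q = \sum_x (K x) ^t* *m Q *m K x.
Proof. by apply: eq_bigr => x _; rewrite adjK. Qed.

Let sum_adjK_K : \sum_x (K x) ^t* *m K x = 1%:M.
Proof.
under eq_bigr => x _ do rewrite adjK lift_mul /ketbra mul_delta_mx.
by rewrite -lift_sum -(sum_enum_rank (fun k => delta_mx k k)) -mx1_sum_delta lift1.
Qed.

Lemma initop_psd (X : gop) : psd X -> psd (initop vq X).
Proof. by move=> hX; rewrite initopE; apply: psd_sum => x _; apply: psd_congr. Qed.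

Lemma trace_initop_dual (Q X : gop) : \tr (Q *m initop vq X) = \tr (initpre vq Q *m X).
Proof.
rewrite initopE initpreE mulmx_sumr mulmx_suml !mxtrace_sum.
by apply: eq_bigr => x _; rewrite trace_congr.
Qed.

Lemma trace_initop (X : gop) : \tr (initop vq X) = \tr X.
Proof.
rewrite -[initop vq X]mul1mx trace_initop_dual initpreE.
by under eq_bigr do rewrite mulmx1; rewrite sum_adjK_K mul1mx.
Qed.

End Init.

Section Unitary.
Variables (vq : {set V}) (U : lop R d vq).
Hypothesis U_unitary : U \is unitarymx.

Lemma unitary_psd (X : gop) : psd X -> psd (lift U *m X *m lift (U ^t*)).
Proof. by rewrite lift_adj; apply: psd_congr. Qed.

Lemma trace_unitary_dual (Q X : gop) :
  \tr (Q *m (lift U *m X *m lift (U ^t*))) = \tr ((lift (U ^t*) *m Q *m lift U) *m X).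
Proof. by rewrite !lift_adj trace_congr. Qed.

Lemma trace_unitary (X : gop) : \tr (lift U *m X *m lift (U ^t*)) = \tr X.
Proof.
rewrite -[_ *m _ *m _]mul1mx trace_unitary_dual mulmx1 lift_mul.
by rewrite (mulmx1C (unitarymxP U_unitary)) lift1 mul1mx.
Qed.

End Unitary.

End QuantumOperations.

Section ComplexParts.
Variable R : realType.
Local Notation C := R[i].
Local Notation Re := (@complex.Re R).
Local Notation Im := (@complex.Im R).

Lemma Re_add (x y : C) : Re (x + y) = Re x + Re y. Proof. by case: x; case: y. Qed.
Lemma Im_add (x y : C) : Im (x + y) = Im x + Im y. Proof. by case: x; case: y. Qed.

Lemma Re_mul (x y : C) : Re (x * y) = Re x * Re y - Im x * Im y.
Proof. by case: x; case: y. Qed.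

Lemma Im_mul (x y : C) : Im (x * y) = Re x * Im y + Im x * Re y.
Proof. by case: x; case: y. Qed.

Lemma Re_sum (I : Type) (r : seq I) (P : pred I) (F : I -> C) :
  Re (\sum_(i <- r | P i) F i) = \sum_(i <- r | P i) Re (F i).
Proof. exact: (big_morph _ Re_add (erefl : Re 0 = 0)). Qed.

Lemma Im_sum (I : Type) (r : seq I) (P : pred I) (F : I -> C) :
  Im (\sum_(i <- r | P i) F i) = \sum_(i <- r | P i) Im (F i).
Proof. exact: (big_morph _ Im_add (erefl : Im 0 = 0)). Qed.

Lemma Re_le (x y : C) : x <= y -> Re x <= Re y.
Proof. by rewrite lecE => /andP[]. Qed.

Lemma Im_le (x y : C) : x <= y -> Im x = Im y.
Proof. by rewrite lecE => /andP[/eqP]. Qed.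

Lemma Re_qform_evecD n (A : 'M[C]_n) i j : A ^t* = A ->
  Re (qform A (evec i + 1 *: evec j)) = Re (A i i) + 2 * Re (A i j) + Re (A j j).
Proof.
move/matrixP/(_ j i); rewrite !mxE qform_evecD => <-.
by case: (A i i) (A i j) (A j j) => [? ?] [? ?] [? ?] /=; ring.
Qed.

Lemma Re_qform_evecDi n (A : 'M[C]_n) i j : A ^t* = A ->
  Re (qform A (evec i + 'i *: evec j)) = Re (A i i) - 2 * Im (A i j) + Re (A j j).
Proof.
move/matrixP/(_ j i); rewrite !mxE qform_evecD => <-.
by case: (A i i) (A i j) (A j j) => [? ?] [? ?] [? ?] /=; ring.
Qed.

End ComplexParts.

Section MonotoneLimit.
Local Open Scope classical_set_scope.
Local Open Scope ring_scope.
Variables (R : realType) (n : nat) (T : nat -> 'M[R[i]]_n) (b : R[i]).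
Local Notation C := R[i].
Local Notation Re := (@complex.Re R).
Local Notation Im := (@complex.Im R).

Lemma cvgn_sum (I : finType) (f : I -> nat -> R) (l : I -> R) :
  (forall i, f i k @[k --> \oo] --> l i) -> (\sum_i f i k) @[k --> \oo] --> \sum_i l i.
Proof. by move=> h; apply: cvg_big => //; exact: add_continuous. Qed.

Hypotheses (T_psd : forall k, psd (T k)) (T_incr : forall k, lowner (T k) (T k.+1)).
Hypothesis T_trace_le : forall k, \tr (T k) <= b.

Lemma Re_qform_nondecreasing u : nondecreasing_seq (fun k => Re (qform (T k) u)).
Proof.
apply/nondecreasing_seqP => k; apply: Re_le; rewrite -subr_ge0.
by rewrite -qformB; apply: T_incr.
Qed.

Lemma cvgn_Re_qform u (M : R) :
  (forall k, Re (qform (T k) u) <= M) -> cvgn (fun k => Re (qform (T k) u)).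
Proof.
move=> hM; apply: nondecreasing_is_cvgn (Re_qform_nondecreasing u) _.
by exists M => _ [k _ <-].
Qed.

Lemma Re_diag_le k i : Re (T k i i) <= Re b.
Proof.
apply: Re_le; apply: le_trans (T_trace_le k); rewrite /mxtrace (bigD1 i) //= lerDl.
by apply: sumr_ge0 => j _; apply: psd_diag_ge0.
Qed.

(* Parallelogram law: the forms at [e_i + e e_j] and [e_i - e e_j] add up to
   [2 T_ii + 2 T_jj], and both are nonnegative. *)
Lemma Re_qform_evecD_le k i j (e : C) : e^* * e = 1 ->
  Re (qform (T k) (evec i + e *: evec j)) <= 4 * Re b.
Proof.
move=> he; have hsum : qform (T k) (evec i + e *: evec j) +
    qform (T k) (evec i + (- e) *: evec j) =
    T k i i + T k i i + (T k j j + T k j j).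
  rewrite !qform_evecD rmorphN /=.
  transitivity (T k i i + T k i i + (e^* * e) * (T k j j + T k j j)); first by ring.
  by rewrite he mul1r.
have := Re_le (T_psd k (evec i + (- e) *: evec j)).
move: (congr1 Re hsum); rewrite !Re_add.
have := Re_diag_le k i; have := Re_diag_le k j; rewrite -/(qform _ _) /=; lra.
Qed.

Lemma cvgn_Re_diag i : cvgn (fun k => Re (T k i i)).
Proof.
under eq_fun do rewrite -qform_evec.
by apply: cvgn_Re_qform => k; rewrite qform_evec; apply: Re_diag_le.
Qed.

(* Polarization, using that [T k] is hermitian. *)
Lemma cvgn_Re_entry i j : cvgn (fun k => Re (T k i j)).
Proof.
pose u k := Re (qform (T k) (evec i + 1 *: evec j)).
have cvg_u : cvgn u.
  by apply: cvgn_Re_qform => k; apply: Re_qform_evecD_le; rewrite conjC1 mulr1.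
have -> : (fun k => Re (T k i j)) = fun k => (u k - Re (T k i i) - Re (T k j j)) / 2.
  by apply: funext => k; rewrite /u Re_qform_evecD ?psd_hermitian //; field.
exact: is_cvgM (is_cvgB (is_cvgB cvg_u (@cvgn_Re_diag i)) (@cvgn_Re_diag j)) (is_cvg_cst _).
Qed.

Lemma cvgn_Im_entry i j : cvgn (fun k => Im (T k i j)).
Proof.
pose u k := Re (qform (T k) (evec i + 'i *: evec j)).
have cvg_u : cvgn u.
  apply: cvgn_Re_qform => k; apply: Re_qform_evecD_le.
  by rewrite conjCi mulNr -expr2 sqrCi opprK.
have -> : (fun k => Im (T k i j)) = fun k => (Re (T k i i) + Re (T k j j) - u k) / 2.
  by apply: funext => k; rewrite /u Re_qform_evecDi ?psd_hermitian //; field.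
exact: is_cvgM (is_cvgB (is_cvgD (@cvgn_Re_diag i) (@cvgn_Re_diag j)) cvg_u) (is_cvg_cst _).
Qed.

Local Notation L := (mxlim T).

Lemma cvg_trace_mul (Y : 'M[C]_n) :
  Re (\tr (T k *m Y)) @[k --> \oo] --> Re (\tr (L *m Y)) /\
  Im (\tr (T k *m Y)) @[k --> \oo] --> Im (\tr (L *m Y)).
Proof.
have trE (A : 'M[C]_n) : \tr (A *m Y) = \sum_i \sum_j A i j * Y j i.
  by apply: eq_bigr => i _; rewrite mxE.
have cvgRe i j : Re (T k i j) @[k --> \oo] --> Re (L i j).
  by rewrite mxE /=; apply: cvgn_Re_entry.
have cvgIm i j : Im (T k i j) @[k --> \oo] --> Im (L i j).
  by rewrite mxE /=; apply: cvgn_Im_entry.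
split.
- under eq_fun do rewrite trE Re_sum.
  rewrite trE Re_sum; apply: cvgn_sum => i.
  under eq_fun do rewrite Re_sum.
  rewrite Re_sum; apply: cvgn_sum => j.
  under eq_fun do rewrite Re_mul.
  by rewrite Re_mul; apply: cvgB; apply: cvgM => //; apply: cvg_cst.
- under eq_fun do rewrite trE Im_sum.
  rewrite trE Im_sum; apply: cvgn_sum => i.
  under eq_fun do rewrite Im_sum.
  rewrite Im_sum; apply: cvgn_sum => j.
  under eq_fun do rewrite Im_mul.
  by rewrite Im_mul; apply: cvgD; apply: cvgM => //; apply: cvg_cst.
Qed.

Lemma mxlim_trace_mul_ge (Y : 'M[C]_n) (a : C) :
  (forall k, a <= \tr (T k *m Y)) -> a <= \tr (L *m Y).
Proof.
move=> h; have [cvgRe cvgIm] := cvg_trace_mul Y; rewrite lecE; apply/andP; split.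
  apply/eqP; apply/le_anti/andP; split.
    by apply: (cvgr_to_le cvgIm); apply: nearW => k; rewrite (Im_le (h k)).
  by apply: (cvgr_to_ge cvgIm); apply: nearW => k; rewrite (Im_le (h k)).
by apply: (cvgr_to_ge cvgRe); apply: nearW => k; apply: Re_le.
Qed.

Lemma mxlim_trace_mul_le (Y : 'M[C]_n) (a : C) :
  (forall k, \tr (T k *m Y) <= a) -> \tr (L *m Y) <= a.
Proof.
move=> h; rewrite -lerN2 -(mxtrace_mulN L Y); apply: mxlim_trace_mul_ge => k.
rewrite mxtrace_mulN lerN2; exact: h.
Qed.

Lemma mxlim_psd : psd L.
Proof.
apply: psd_trace_outerP => u; apply: mxlim_trace_mul_ge => k.
by apply: psd_trace_mul_ge0; [apply: T_psd | apply: psd_outer].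
Qed.

Lemma mxlim_trace_le : \tr L <= b.
Proof.
rewrite -[L]mulmx1; apply: mxlim_trace_mul_le => k.
rewrite mulmx1; exact: T_trace_le.
Qed.

End MonotoneLimit.

Definition trace_nonincreasing (R : realType) (V : finType) (d : V -> nat)
    (f : gop R d -> gop R d) : Prop :=
  forall rho, psd rho -> psd (f rho) /\ \tr (f rho) <= \tr rho.

Lemma pstate_le (R : realType) n (rho s : 'M[R[i]]_n) :
  pstate rho -> psd s -> \tr s <= \tr rho -> pstate s.
Proof. by move=> [_ rho_le1] s_psd s_le; split => //; apply: le_trans rho_le1. Qed.

Section WhileLoop.
Variables (R : realType) (V : finType) (d : V -> nat) (vq : {set V}).
Local Notation gop := (gop R d).
Variables (B : lop R d vq) (body : gop -> gop) (rho : gop).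
Hypotheses (B_meas : is_binmeas B) (body_tni : trace_nonincreasing body).
Hypothesis rho_psd : psd rho.

Definition loop_iter k := iter k (fun X => body (B1op B X)) rho.

Definition loop_partial n := \sum_(k < n) B0op B (loop_iter k).

Lemma loop_iter_psd k : psd (loop_iter k).
Proof.
elim: k => [|k IH]; first exact: rho_psd.
rewrite /loop_iter iterS -/(loop_iter k).
by case: (body_tni (Mop_psd B_meas.1 IH)).
Qed.

Lemma trace_loop_iterS k :
  \tr (loop_iter k.+1) + \tr (B0op B (loop_iter k)) <= \tr (loop_iter k).
Proof.
have [_ le_tr] := body_tni (Mop_psd B_meas.1 (loop_iter_psd k)).
by rewrite -(binmeas_trace (loop_iter k) B_meas) addrC lerD2l.
Qed.

Lemma trace_loop_partial n : \tr (loop_partial n) + \tr (loop_iter n) <= \tr rho.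
Proof.
elim: n => [|n IH]; first by rewrite /loop_partial big_ord0 linear0 add0r.
rewrite /loop_partial big_ord_recr /= -/(loop_partial n) mxtraceD -addrA.
by apply: le_trans IH; rewrite lerD2l addrC; apply: trace_loop_iterS.
Qed.

Lemma loop_partial_psd n : psd (loop_partial n).
Proof. by apply: psd_sum => k _; apply/(Mop_psd B_meas.2)/loop_iter_psd. Qed.

Lemma loop_partial_incr n : lowner (loop_partial n) (loop_partial n.+1).
Proof.
rewrite /lowner /loop_partial big_ord_recr /= addrAC subrr add0r.
exact/(Mop_psd B_meas.2)/loop_iter_psd.
Qed.

Lemma trace_loop_partial_le n : \tr (loop_partial n) <= \tr rho.
Proof.
apply: le_trans (trace_loop_partial n); rewrite lerDl.
exact/psd_trace_ge0/loop_iter_psd.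
Qed.

Lemma trace_loop_iter_le n : \tr (loop_iter n) <= \tr rho.
Proof.
apply: le_trans (trace_loop_partial n); rewrite lerDr.
exact/psd_trace_ge0/loop_partial_psd.
Qed.

Lemma while_trace_nonincreasing :
  psd (mxlim loop_partial) /\ \tr (mxlim loop_partial) <= \tr rho.
Proof.
split; [apply: mxlim_psd | apply: mxlim_trace_le].
- exact: loop_partial_psd.
- exact: loop_partial_incr.
- exact: trace_loop_partial_le.
- exact: loop_partial_psd.
- exact: loop_partial_incr.
- exact: trace_loop_partial_le.
Qed.

End WhileLoop.

Section PartialCorrectness.
Variables (R : realType) (V : finType) (d : V -> nat).
Local Notation C := R[i].
Local Notation gop := (gop R d).
Local Notation prog := (prog R d).

Lemma sem_trace_nonincreasing (S : prog) : concrete S -> trace_nonincreasing (sem S).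
Proof.
elim: S => [|vq|vq U hU|S1 IH1 S2 IH2|N S IH|vq k M hM br IH|vq B hB S IH|//].
- by move=> _ rho hr; split; last exact: lexx.
- by move=> _ rho hr; split; [apply: initop_psd | rewrite trace_initop].
- by move=> _ rho hr; split; [apply: unitary_psd | rewrite (trace_unitary hU)].
- move=> [c1 c2] rho hr; have [h1 t1] := IH1 c1 rho hr.
  by have [h2 t2] := IH2 c2 _ h1; split => //; apply: le_trans t1.
- move=> /= c rho hr; elim: N => [|N [hN tN]] /=; first by split; last exact: lexx.
  by have [h' t'] := IH c _ hN; split => //; apply: le_trans tN.
- move=> c rho hr; have sem_w w := IH w (c w) _ (Mop_psd (meas_psd w hM) hr).
  split; first by apply: psd_sum => w _; case: (sem_w w).
  rewrite /= mxtrace_sum -(meas_trace rho hM); apply: ler_sum => w _.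
  by case: (sem_w w).
- by move=> c rho hr; exact: while_trace_nonincreasing hB (IH c) hr.
Qed.

Lemma le_add_sub_trans (x y z r s t : C) :
  x <= y + r - s -> y <= z + s - t -> x <= z + r - t.
Proof.
move=> h1 h2; apply: le_trans h1 _.
have -> : z + r - t = (z + s - t) + r - s by ring.
by rewrite lerD2r lerD2r.
Qed.

Lemma par_valid_skip (P Q : gop) : lowner P Q -> par_valid P Skip Q.
Proof. by move=> hPQ rho [hr _]; rewrite /= addrK; apply: lowner_trace. Qed.

Lemma par_valid_init vq (P Q : gop) :
  lowner P (initpre vq Q) -> par_valid P (Init vq) Q.
Proof.
move=> hPQ rho [hr _]; rewrite /= trace_initop_dual trace_initop addrK.
exact: lowner_trace.
Qed.

Lemma par_valid_unit vq (U : lop R d vq) (hU : U \is unitarymx) (P Q : gop) :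
  lowner P (lift (U ^t*) *m Q *m lift U) -> par_valid P (Unit hU) Q.
Proof.
move=> hPQ rho [hr _]; rewrite /= trace_unitary_dual (trace_unitary hU) addrK.
exact: lowner_trace.
Qed.

Lemma par_valid_seq (P Rm Q : gop) (S1 S2 : prog) :
  trace_nonincreasing (sem S1) -> par_valid P S1 Rm -> par_valid Rm S2 Q ->
  par_valid P (Seq S1 S2) Q.
Proof.
move=> S1_tni h1 h2 rho hr; have [hs ts] := S1_tni rho hr.1.
exact: le_add_sub_trans (h1 rho hr) (h2 _ (pstate_le hr hs ts)).
Qed.

(* The defect [\tr rho - \tr (sem S rho)] is the same for every [g], so it
   survives the convex combination since the weights sum to [1]. *)
Lemma par_valid_split (P Q : gop) (G : finType) (P' Q' : G -> gop) (p : G -> R)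
    (S : prog) :
  trace_nonincreasing (sem S) -> (forall g, 0 <= p g) -> \sum_g p g = 1 ->
  lowner P (\sum_g (Complex (p g) 0) *: P' g) ->
  lowner (\sum_g (Complex (p g) 0) *: Q' g) Q ->
  (forall g, par_valid (P' g) S (Q' g)) -> par_valid P S Q.
Proof.
move=> S_tni p_ge0 p_sum1 hP hQ hv rho hr; have [hs _] := S_tni rho hr.1.
set defect := \tr rho - \tr (sem S rho).
have sum_p1 : \sum_g Complex (p g) 0 = 1 :> C.
  by rewrite -(rmorph_sum (real_complex R)) p_sum1.
have hmix : \tr ((\sum_g Complex (p g) 0 *: P' g) *m rho) <=
            \tr ((\sum_g Complex (p g) 0 *: Q' g) *m sem S rho) + defect.
  rewrite -[defect]mul1r -sum_p1 mulr_suml !mulmx_suml !mxtrace_sum -big_split /=.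
  apply: ler_sum => g _; rewrite -!scalemxAl !mxtraceZ -mulrDr ler_wpM2l ?ler0c //.
  by rewrite /defect addrA; apply: hv.
apply: le_trans (lowner_trace hP hr.1) _; apply: le_trans hmix _.
by rewrite -addrA -/defect lerD2r lowner_trace.
Qed.

Lemma par_valid_repeat (P Q : gop) (N : nat) (Rm : nat -> gop) (S : prog) :
  trace_nonincreasing (sem S) ->
  (forall j, (j < N)%N -> par_valid (Rm j) S (Rm j.+1)) ->
  lowner P (Rm 0%N) -> lowner (Rm N) Q -> par_valid P (Repeat N S) Q.
Proof.
move=> S_tni hv hP hQ rho hr /=.
have inv j : (j <= N)%N -> [/\ psd (iter j (sem S) rho),
    \tr (iter j (sem S) rho) <= \tr rho &
    \tr (Rm 0%N *m rho) <= \tr (Rm j *m iter j (sem S) rho) + \tr rho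
                           - \tr (iter j (sem S) rho)].
  elim: j => [|j IH] hj; first by split; [exact: hr.1 | exact: lexx | rewrite addrK].
  have [h1 t1 v1] := IH (ltnW hj); have [h2 t2] := S_tni _ h1.
  rewrite iterS; split => //; first exact: le_trans t1.
  exact: le_add_sub_trans v1 (hv j hj _ (pstate_le hr h1 t1)).
have [hN _ vN] := inv N (leqnn N).
apply: le_trans (lowner_trace hP hr.1) _; apply: le_trans vN _.
by rewrite lerD2r lerD2r lowner_trace.
Qed.

Lemma par_valid_case vq k (M : 'I_k -> lop R d vq) (hM : is_meas M)
    (br : 'I_k -> prog) (P Q : gop) (Pw : 'I_k -> gop) :
  (forall w, trace_nonincreasing (sem (br w))) ->
  (forall w, par_valid (Pw w) (br w) Q) ->
  lowner P (\sum_w Mop (M w) (Pw w)) -> par_valid P (Case hM br) Q.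
Proof.
move=> br_tni hv hP rho hr; rewrite [sem _ _]/=.
have Mrho_psd w : psd (Mop (M w) rho) := Mop_psd (meas_psd w hM) hr.1.
apply: le_trans (lowner_trace hP hr.1) _.
rewrite mulmx_suml mulmx_sumr !mxtrace_sum -(meas_trace rho hM) -big_split -sumrB.
apply: ler_sum => w _; rewrite -(trace_Mop_dual (meas_psd w hM)); apply: hv.
apply: pstate_le hr (Mrho_psd w) _.
rewrite -(meas_trace rho hM) (bigD1 w) //= lerDl.
by apply: sumr_ge0 => w' _; apply/psd_trace_ge0/Mrho_psd.
Qed.

Section WhileRule.
Variables (vq : {set V}) (B : lop R d vq) (S : prog) (Q Rm : gop).
Hypotheses (B_meas : is_binmeas B) (S_tni : trace_nonincreasing (sem S)).
Hypotheses (Q_le1 : lowner Q 1%:M) (Rm_le1 : lowner Rm 1%:M).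
Hypothesis S_valid : par_valid Rm S (B0op B Q + B1op B Rm).

Local Notation X := (B0op B Q + B1op B Rm).

Section Invariant.
Variable rho : gop.
Hypothesis rho_st : pstate rho.

Local Notation T := (loop_partial B (sem S) rho).
Local Notation it := (loop_iter B (sem S) rho).

Lemma while_step n :
  \tr (X *m it n) - \tr (it n) <=
  (\tr (Q *m B0op B (it n)) - \tr (B0op B (it n))) + (\tr (X *m it n.+1) - \tr (it n.+1)).
Proof.
have it_psd := loop_iter_psd B_meas S_tni rho_st.1 n.
have st1 : pstate (B1op B (it n)).
  apply: pstate_le rho_st (Mop_psd B_meas.1 it_psd) _.
  apply: le_trans (trace_loop_iter_le B_meas S_tni rho_st.1 n).
  rewrite -(binmeas_trace (it n) B_meas) lerDr.
  exact/psd_trace_ge0/(Mop_psd B_meas.2).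
have hv : \tr (Rm *m B1op B (it n)) <=
          \tr (X *m it n.+1) + \tr (B1op B (it n)) - \tr (it n.+1) := S_valid st1.
have eX : \tr (X *m it n) = \tr (Q *m B0op B (it n)) + \tr (Rm *m B1op B (it n)).
  by rewrite mulmxDl mxtraceD -(trace_Mop_dual B_meas.2) -(trace_Mop_dual B_meas.1).
rewrite eX -(binmeas_trace (it n) B_meas) opprD addrACA lerD2l lerBlDr addrAC.
exact: hv.
Qed.

Lemma while_invariant n :
  \tr (X *m rho) - \tr rho <=
  (\tr (Q *m T n) - \tr (T n)) + (\tr (X *m it n) - \tr (it n)).
Proof.
elim: n => [|n IH]; first by rewrite /loop_partial big_ord0 mulmx0 linear0 subrr add0r.
apply: le_trans IH _; rewrite /loop_partial big_ord_recr /= mulmxDr !mxtraceD.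
have regroup (a b c e f : C) : a + b - (c + e) + f = (a - c) + ((b - e) + f) by ring.
by rewrite regroup lerD2l while_step.
Qed.

End Invariant.

Lemma par_valid_while (P : gop) : lowner P X -> par_valid P (While B_meas S) Q.
Proof.
move=> hP rho hr; rewrite [sem _ _]/=.
have trQ1 (A : gop) : \tr (A *m (Q - 1%:M)) = \tr (Q *m A) - \tr A.
  by rewrite mulmxBr mulmx1 raddfB /= mxtrace_mulC.
have bound n : \tr (X *m rho) - \tr rho <=
               \tr (loop_partial B (sem S) rho n *m (Q - 1%:M)).
  apply: le_trans (while_invariant hr n) _; rewrite trQ1 -[leRHS]addr0 lerD2l subr_le0.
  have := lowner_trace (binmeas_lowner1 B_meas Q_le1 Rm_le1) (loop_iter_psd B_meas S_tni hr.1 n).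
  by rewrite mul1mx.
have := mxlim_trace_mul_ge (loop_partial_psd B_meas S_tni hr.1)
  (loop_partial_incr B_meas S_tni hr.1) (trace_loop_partial_le B_meas S_tni hr.1) bound.
rewrite trQ1 lerBlDr addrAC => hlim.
exact: le_trans (lowner_trace hP hr.1) hlim.
Qed.

End WhileRule.

End PartialCorrectness.

Section Refinement.
Variables (R : realType) (V : finType) (d : V -> nat).
Local Notation gop := (gop R d).
Local Notation prog := (prog R d).

Fixpoint hole_posts_le1 (S : prog) : Prop :=
  match S with
  | Seq S1 S2 => hole_posts_le1 S1 /\ hole_posts_le1 S2
  | Repeat _ S1 => hole_posts_le1 S1
  | Case _ _ _ _ br => forall w, hole_posts_le1 (br w)
  | While _ _ _ S1 => hole_posts_le1 S1
  | Hole _ _ Q => forall l, lowner (Q l) 1%:M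
  | _ => True
  end.

Fixpoint realizes (S T : prog) {struct S} : Prop :=
  match S with
  | Skip => T = Skip
  | Init vq => T = Init vq
  | Unit _ _ hU => T = Unit hU
  | Seq S1 S2 => exists T1 T2, T = Seq T1 T2 /\ realizes S1 T1 /\ realizes S2 T2
  | Repeat N S1 => exists T1, T = Repeat N T1 /\ realizes S1 T1
  | Case _ _ _ hM br => exists brT, T = Case hM brT /\ forall w, realizes (br w) (brT w)
  | While _ _ hB S1 => exists T1, T = While hB T1 /\ realizes S1 T1
  | Hole _ P Q => concrete T /\ forall l, par_valid (P l) T (Q l)
  end.

Lemma hole_posts_le1_refine (S1 S2 : prog) :
  refine_par S1 S2 -> hole_posts_le1 S1 -> hole_posts_le1 S2.
Proof.
elim; try by move=> *; exact: I.
- by move=> Lam P Q Rm hR hQ; split=> [l|]; [case: (hR l) | exact: hQ].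
- by move=> Lam P Q G P' Q' hPQ _ _ lg; case: (hPQ lg) => _ [].
- by move=> Lam P Q N Rm hR _ _ _ [l j]; case: (hR l (val j).+1 (ltn_ord j)).
- by move=> Lam P Q vq k M hM Pw _ _ hQ w; exact: hQ.
- move=> Lam P Q vq B hB Rm hR _ hQ l.
  by apply: binmeas_lowner1 (hQ l) _; case: (hR l).
- by move=> S1' S1'' S2' _ IH [h1 h2]; split; [exact: IH | exact: h2].
- by move=> S1' S2' S2'' _ IH [h1 h2]; split; [exact: h1 | exact: IH].
- by move=> N S1' S1'' _ IH h; exact: IH.
- move=> vq k M hM br w S' _ IH h w'.
  change (hole_posts_le1 (if w' == w then S' else br w')).
  by case: eqP => [_|_]; [exact: IH (h w) | exact: h w'].
- by move=> vq B hB S1' S1'' _ IH h; exact: IH.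
Qed.

Lemma realizes_refl (S : prog) : concrete S -> realizes S S.
Proof.
elim: S => //.
- by move=> S1 IH1 S2 IH2 [c1 c2]; exists S1, S2; split => //; split; [apply: IH1|apply: IH2].
- by move=> N S IH c; exists S; split => //; apply: IH.
- by move=> vq k M hM br IH c; exists br; split => // w; apply: IH.
- by move=> vq B hB S IH c; exists S; split => //; apply: IH.
Qed.

Lemma realizes_refine (S1 S2 : prog) :
  refine_par S1 S2 -> hole_posts_le1 S1 -> forall T, realizes S2 T -> realizes S1 T.
Proof.
elim.
- move=> Lam P Q hPQ _ T ->; split; first exact: I.
  by move=> l; exact: par_valid_skip (hPQ l).
- move=> Lam P Q vq hPQ _ T ->; split; first exact: I.
  by move=> l; exact: par_valid_init (hPQ l).
- move=> Lam P Q vq U hU hPQ _ T ->; split; first exact: I.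
  by move=> l; exact: par_valid_unit (hPQ l).
- move=> Lam P Q Rm _ _ T [T1 [T2 [-> [[c1 h1] [c2 h2]]]]]; split; first by split.
  by move=> l; apply: par_valid_seq (sem_trace_nonincreasing c1) (h1 l) (h2 l).
- move=> Lam P Q G P' Q' _ hp _ T [cT h]; split; first exact: cT.
  move=> l; have [p [p_ge0 [p_sum1 [hP hQ]]]] := hp l.
  exact: par_valid_split (sem_trace_nonincreasing cT) p_ge0 p_sum1 hP hQ (fun g => h (l, g)).
- move=> Lam P Q N Rm _ hP hN _ T [T1 [-> [c1 h1]]]; split; first exact: c1.
  move=> l; apply: par_valid_repeat (sem_trace_nonincreasing c1) _ (hP l) (hN l).
  by move=> j hj; apply: (h1 (l, Ordinal hj)).
- move=> Lam P Q vq k M hM Pw _ hP _ T [brT [-> h]]; split.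
    by move=> w; case: (h w) => cw _; exact: cw.
  move=> l; apply: (par_valid_case hM _ _ (hP l)) => w; have [cw hw] := h w.
    exact: sem_trace_nonincreasing cw.
  exact: hw.
- move=> Lam P Q vq B hB Rm hR hP hQ T [T1 [-> [c1 h1]]]; split; first exact: c1.
  move=> l; have [_ Rm_le1] := hR l.
  apply: (par_valid_while hB (sem_trace_nonincreasing c1) (hQ l) Rm_le1 (h1 l)).
  exact: hP.
- move=> S1' S1'' S2' _ IH [w1 w2] T [T1 [T2 [-> [h1 h2]]]].
  by exists T1, T2; split; last split; [|exact: IH w1 _ h1|exact: h2].
- move=> S1' S2' S2'' _ IH [w1 w2] T [T1 [T2 [-> [h1 h2]]]].
  by exists T1, T2; split; last split; [|exact: h1|exact: IH w2 _ h2].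
- move=> N S1' S1'' _ IH w1 T [T1 [-> h1]].
  by exists T1; split; last exact: IH w1 _ h1.
- move=> vq k M hM br w S' _ IH wbr T [brT [-> h]]; exists brT; split; first by [].
  move=> w'; have := h w'.
  change (realizes (if w' == w then S' else br w') (brT w') -> realizes (br w') (brT w')).
  by case: eqP => [->|_]; [exact: IH (wbr w) _ | exact].
- move=> vq B hB S1' S1'' _ IH w1 T [T1 [-> h1]].
  by exists T1; split; last exact: IH w1 _ h1.
Qed.

Lemma realizes_refine_star (S1 S2 : prog) : refine_par_star S1 S2 ->
  hole_posts_le1 S1 -> concrete S2 -> realizes S1 S2.
Proof.
elim=> [S _ cS|S1' S2' S3' h _ IH w c]; first exact: realizes_refl.
exact: realizes_refine h w _ (IH (hole_posts_le1_refine h w) c).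
Qed.

End Refinement.

Theorem mainTheorem1 (R : realType) (V : finType) (d : V -> nat)
    (P Q : gop R d) (S : prog R d) :
  is_pred P -> is_pred Q -> concrete S ->
  refine_par_star (hole1 P Q) S ->
  par_valid P S Q.
Proof.
move=> _ [_ Q_le1] cS hPS.
have posts : hole_posts_le1 (hole1 P Q) := fun _ => Q_le1.
by have [_ valid] := realizes_refine_star hPS posts cS; apply: valid tt.
Qed.
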